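(* Let $\mathcal F$ be a Banach function space compactly embedded in $C(\mathbf X)$ and $\gamma>0$ such that $$L:=\limsup_{\epsilon\to0}\frac{\mathcal H_\epsilon(U_{\mathcal F})}{(1/\epsilon)^\gamma}\in(0,\infty).$$ There exists a strategy for Predictor such that for every $F\in\mathcal F$ there is $N_0$ (depending on $F$ but not on Reality's moves) such that for all $N\ge N_0$ and all moves of Reality $$\sum_{n=1}^N(y_n-\mu_n)^2\le\sum_{n=1}^N(y_n-F(x_n))^2+CL^{\frac1{\gamma+1}}\phi^{\frac\gamma{\gamma+1}}N^{\frac\gamma{\gamma+1}},$$ where $C$ is a universal constant and $\phi:=2\max(1,\|F\|_{\mathcal F})$.
   Context: Protocol: $\mathbf X$ a nonempty topological space; at each round $n$ Reality announces $x_n\in\mathbf X$, Predictor announces $\mu_n\in\mathbb R$, Reality announces $y_n\in[-1,1]$; a strategy for Predictor maps each history to $\mu_n$. $C(\mathbf X)$: bounded continuous real functions with supremum norm. A Banach function space compactly embedded in $C(\mathbf X)$: a linear subspace $\mathcal F\subseteq C(\mathbf X)$ with a norm $\|\cdot\|_{\mathcal F}$ making it a Banach space whose unit ball $U_{\mathcal F}=\{F:\|F\|_{\mathcal F}\le1\}$ is compact in $C(\mathbf X)$. $\mathcal H_\epsilon(A)$: $\log_2$ of the minimal number of points of $A$ forming an $\epsilon$-net for $A$ in the supremum metric. *)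

From HB Require Import structures.
From mathcomp Require Import all_boot all_order all_algebra.
From mathcomp Require Import all_classical all_reals all_analysis.
From mathcomp Require Import Rstruct Rstruct_topology.
Set Implicit Arguments. Unset Strict Implicit. Unset Printing Implicit Defensive.
Import Order.TTheory GRing.Theory Num.Theory.
Local Open Scope classical_set_scope.
Local Open Scope ring_scope.

Notation R := Rdefinitions.R.

Section Defs.
Variable X : topologicalType.

Definition bounded_continuous (f : X -> R) : Prop :=
  continuous f /\ exists M : R, forall x, `|f x| <= M.

Definition banach_fun_space_cpt (F : set (X -> R)) (nrm : (X -> R) -> R) : Prop :=
  [/\
      (forall f, F f -> bounded_continuous f) /\
      F (fun=> 0) /\
      (forall f g, F f -> F g -> F (f \+ g)) /\
      (forall (a : R) f, F f -> F (fun x => a * f x)),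
      (forall f, F f -> 0 <= nrm f) /\
      (forall f, F f -> nrm f = 0 -> f = (fun=> 0)) /\
      (forall (a : R) f, F f -> nrm (fun x => a * f x) = `|a| * nrm f) /\
      (forall f g, F f -> F g -> nrm (f \+ g) <= nrm f + nrm g),
      (forall u : nat -> (X -> R), (forall n, F (u n)) ->
         (forall e : R, 0 < e -> exists N, forall m n, (N <= m)%N -> (N <= n)%N ->
              nrm (u m \- u n) < e) ->
         exists f, F f /\ forall e : R, 0 < e -> exists N, forall n, (N <= n)%N ->
              nrm (u n \- f) < e)
    & (* unit ball compact for the supremum metric (uniform convergence) *)
      compact ([set f | F f /\ nrm f <= 1] : set {uniform X -> R})].

Definition unit_ball (F : set (X -> R)) (nrm : (X -> R) -> R) : set (X -> R) :=
  [set f | F f /\ nrm f <= 1].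

Definition is_net (A : set (X -> R)) (eps : R) (s : seq (X -> R)) : Prop :=
  (forall g, g \in s -> A g) /\
  (forall f, A f -> exists2 g, g \in s & forall x, `|f x - g x| <= eps).

Definition covering_number (A : set (X -> R)) (eps : R) : R :=
  inf [set (size s)%:R | s in [set s | is_net A eps s]].

Definition metric_entropy (A : set (X -> R)) (eps : R) : R :=
  ln (covering_number A eps) / ln 2.

End Defs.

Definition entropy_limsup (X : topologicalType) (U : set (X -> R)) (gamma : R)
  : \bar R :=
  limf_esup (fun eps : R => ((metric_entropy U eps) / (eps^-1) `^ gamma)%:E)
            (at_right (0 : R)).

(* Prediction protocol: the history before round n is the list of previous
   (x_i, y_i); Predictor's moves are determined by the strategy. *)
Definition strategy (X : Type) := seq (X * R) -> X -> R.

Definition pred_move (X : Type) (S : strategy X) (x : nat -> X) (y : nat -> R)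
  (n : nat) : R :=
  S [seq (x i, y i) | i <- iota 0 n] (x n).

From HB Require Import structures.
From mathcomp Require Import all_boot all_order all_algebra.
From mathcomp Require Import all_classical all_reals all_analysis.
From mathcomp Require Import Rstruct Rstruct_topology.
From mathcomp Require Import ring lra.
Set Implicit Arguments. Unset Strict Implicit. Unset Printing Implicit Defensive.
Import Order.TTheory GRing.Theory Num.Theory.
Local Open Scope classical_set_scope.
Local Open Scope ring_scope.

(* Predictor aggregates countably many experts by exponential weights with
   learning rate 1/32, small enough for the square loss on [-1, 1] to be
   exp-concave, so that the regret against any expert is at most 32 times the
   log of its inverse prior weight.  For all naturals K, m and every point g of
   a minimal r_(K+m)-net of the unit ball, one expert predicts 0 up to round
   max(K, m) and the clipped value of 2^m g afterwards; its prior weight is of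
   order 2^-max(K,m) / #net.  For F with ||F|| <= 2^m <= phi and
   2^K <= N < 2^(K+1), the expert approximating F / 2^m has regret
   O(max(K, m)) + 32 ln #net + 4 N 2^m r_(K+m).  The radius
   r_t = L^(1/(gamma+1)) 2^(-t/(gamma+1)) balances the entropy term
   ln #net <~ L r_t^-gamma against the approximation term 2^t r_t: both equal
   L^(1/(gamma+1)) 2^(t gamma/(gamma+1)) <= L^(1/(gamma+1)) (N phi)^(gamma/(gamma+1)),
   which for large N also absorbs the O(max(K, m)) term. *)

Lemma expR_le_quad (z : R) : z <= 1/2 -> expR z <= 1 + z + 2 * z ^+ 2.
Proof.
move=> z_le.
have h1 : 1 - z <= expR (- z) by exact: expR_ge1Dx.
have h2 : expR z * expR (- z) = 1 by rewrite -exp.expRD subrr exp.expR0.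
have E0 := expR_gt0 z.
have h3 : expR z * (1 - z) <= 1 by rewrite -[X in _ <= X]h2 ler_wpM2l // ltW.
nra.
Qed.

Lemma expR_sqloss_tangent (y p q : R) :
  -1 <= y <= 1 -> -1 <= p <= 1 -> -1 <= q <= 1 ->
  expR (- (1/32) * (y - p) ^+ 2) <=
  expR (- (1/32) * (y - q) ^+ 2) * (1 + 2 * (1/32) * (y - q) * (p - q)).
Proof.
move=> /andP[y1 y2] /andP[p1 p2] /andP[q1 q2].
set z := (1/32) * ((p - q) * (2 * y - p - q)).
have -> : - (1/32) * (y - p) ^+ 2 = - (1/32) * (y - q) ^+ 2 + z by rewrite /z; ring.
rewrite exp.expRD; apply: ler_wpM2l; first exact: ltW (expR_gt0 _).
have s16 : (2 * y - p - q) ^+ 2 <= 16 by nra.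
have d0 : 0 <= (p - q) ^+ 2 by exact: sqr_ge0.
apply: le_trans (@expR_le_quad z _) _; first by rewrite /z; nra.
have hz1 : z = 2 * (1/32) * (y - q) * (p - q) - (1/32) * (p - q) ^+ 2 by rewrite /z; ring.
have hz2 : z ^+ 2 = (1/32) * (1/32) * ((p - q) ^+ 2 * (2 * y - p - q) ^+ 2)
  by rewrite /z; ring.
have H : (p - q) ^+ 2 * (2 * y - p - q) ^+ 2 <= 16 * (p - q) ^+ 2 by nra.
rewrite hz2 {1}hz1.
move: H d0; set A := 2 * _ * _ * _; set D := (p - q) ^+ 2; set P := D * _.
lra.
Qed.

Lemma weighted_mean_bound (J : Type) (s : seq J) (w p : J -> R) (w0 : R) :
  0 <= w0 -> (forall j, 0 <= w j) -> (forall j, -1 <= p j <= 1) ->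
  -1 <= (\sum_(j <- s) w j * p j) / (w0 + \sum_(j <- s) w j) <= 1.
Proof.
move=> w0_ge0 w_ge0 p_bd; rewrite -ler_norml.
set W := w0 + _; have W_ge0 : 0 <= W by rewrite addr_ge0 ?sumr_ge0.
rewrite normrM normfV (ger0_norm W_ge0).
have [->|W_neq0] := eqVneq W 0; first by rewrite invr0 mulr0.
rewrite ler_pdivrMr ?lt_def ?W_neq0 // mul1r.
apply: le_trans (ler_norm_sum _ _ _) _.
apply: le_trans (_ : _ <= \sum_(j <- s) w j) _; last by rewrite lerDr.
apply: ler_sum => j _; rewrite normrM ger0_norm // ler_piMr //.
by rewrite ler_norml p_bd.
Qed.

Lemma expR_sqloss_mixture (J : eqType) (s : seq J) (w p : J -> R) (w0 y : R) :
  0 <= w0 -> (forall j, 0 <= w j) -> (forall j, -1 <= p j <= 1) -> -1 <= y <= 1 ->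
  w0 * expR (- (1/32) * (y - 0) ^+ 2) +
    \sum_(j <- s) w j * expR (- (1/32) * (y - p j) ^+ 2)
  <= (w0 + \sum_(j <- s) w j) *
     expR (- (1/32) *
       (y - (\sum_(j <- s) w j * p j) / (w0 + \sum_(j <- s) w j)) ^+ 2).
Proof.
move=> w0_ge0 w_ge0 p_bd y_bd.
have pb_bd := weighted_mean_bound s w0_ge0 w_ge0 p_bd.
set Sw := \sum_(j <- s) w j in pb_bd *; set Swp := \sum_(j <- s) w j * p j in pb_bd *.
set pb := Swp / (w0 + Sw) in pb_bd *.
set E := expR (- (1/32) * (y - pb) ^+ 2); set c := 2 * (1/32) * (y - pb).
have E_ge0 : 0 <= E by exact: ltW (expR_gt0 _).
have hpb : pb * (w0 + Sw) = Swp.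
  have [W0|W_neq0] := eqVneq (w0 + Sw) 0; last by rewrite /pb divfK.
  have Sw0 : Sw = 0 by apply/eqP; rewrite eq_le sumr_ge0 // andbT; lra.
  rewrite W0 mulr0 /Swp big_seq big1 // => j js.
  move: Sw0; rewrite /Sw => /eqP; rewrite psumr_eq0 // => /allP /(_ j js) /eqP->.
  by rewrite mul0r.
have tail : w0 * expR (- (1/32) * (y - 0) ^+ 2) <= w0 * (E * (1 + c * (0 - pb))).
  apply: ler_wpM2l => //; apply: expR_sqloss_tangent y_bd _ pb_bd; lra.
have body : \sum_(j <- s) w j * expR (- (1/32) * (y - p j) ^+ 2)
    <= E * Sw + (E * c) * Swp - (E * c * pb) * Sw.
  rewrite /Sw /Swp !mulr_sumr -big_split -sumrB /=.
  apply: ler_sum => j _.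
  have := ler_wpM2l (w_ge0 j) (expR_sqloss_tangent y_bd (p_bd j) pb_bd).
  by rewrite -/E -/c => /le_trans; apply; rewrite le_eqVlt; apply/orP; left; apply/eqP; ring.
have -> : (w0 + Sw) * E = w0 * (E * (1 + c * (0 - pb))) +
    (E * Sw + E * c * Swp - E * c * pb * Sw) by rewrite -hpb; ring.
exact: lerD.
Qed.

(* Needed by [compact_cover], which is stated for pointed spaces. *)
HB.instance Definition _ (X : choiceType) :=
  isPointed.Build {uniform X -> R} (fun _ : X => (0 : R)).

Section Nets.
Variable X : topologicalType.

Lemma compact_is_net (A : set (X -> R)) (e : R) : 0 < e ->
  compact (A : set {uniform X -> R}) -> exists s, is_net A e s.
Proof.
move=> e_gt0 cA.
pose P (g : X -> R) : set (X -> R) := [set h | forall y, `|g y - h y| < e].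
have nP (g : {uniform X -> R}) : nbhs g (P g).
  apply/uniform_nbhs; exists [set xy : R * R | ball xy.1 e xy.2]; split.
    exact: (entourage_ball _ (PosNum e_gt0)).
  by move=> h /= H y; have := H y I.
move: cA; rewrite (@compact_cover {uniform X -> R}).
case/(_ _ A (fun g => (P g : set {uniform X -> R})°)).
- by move=> g _; exact: open_interior.
- by move=> g Ag; exists g => //; exact: nbhs_singleton (nbhs_interior (nP g)).
move=> D DA cov; exists (finmap.enum_fset D); split.
  by move=> g gD; have := DA g gD; rewrite inE.
move=> f Af; have [g gD Pg] := cov f Af.
by exists g => // y; rewrite distrC; apply/ltW/(interior_subset Pg).
Qed.

Lemma covering_number_attained (A : set (X -> R)) (e : R) : 0 < e ->
  compact (A : set {uniform X -> R}) ->
  exists s, is_net A e s /\ covering_number A e = (size s)%:R.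
Proof.
move=> e_gt0 cA.
pose Q n := `[< exists s, is_net A e s /\ size s = n >].
have exQ : exists n, Q n.
  by have [s ns] := compact_is_net e_gt0 cA; exists (size s); apply/asboolP; exists s.
case: (ex_minnP exQ) => n /asboolP [s [ns <-]] nmin.
exists s; split => //; apply/eqP; rewrite eq_le; apply/andP; split.
  by apply: ge_inf; [exists 0 => _ [t _ <-] | exists s].
apply: lb_le_inf; first by exists (size s)%:R, s.
by move=> _ [t nt <-]; rewrite ler_nat; apply/nmin/asboolP; exists t.
Qed.

Lemma minimal_nets (A : set (X -> R)) (r : nat -> nat -> R) :
  (forall K m, 0 < r K m) -> compact (A : set {uniform X -> R}) ->
  exists net : nat -> nat -> seq (X -> R), forall K m,
    is_net A (r K m) (net K m) /\ covering_number A (r K m) = (size (net K m))%:R.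
Proof.
move=> r_gt0 cA.
have [net netP] := choice (fun Km : nat * nat => covering_number_attained (r_gt0 Km.1 Km.2) cA).
by exists (fun K m => net (K, m)) => K m; exact: netP (K, m).
Qed.

End Nets.

Lemma entropy_limsup_lt (X : topologicalType) (U : set (X -> R)) (g c : R) :
  (entropy_limsup U g < c%:E)%E ->
  exists2 e0 : R, 0 < e0 & forall d, 0 < d -> d < e0 ->
    metric_entropy U d / d^-1 `^ g < c.
Proof.
rewrite /entropy_limsup limf_esupE => /ereal_inf_lt [_ [V FV <-]] supc.
move: FV; rewrite /at_right /within => /nbhs_ballP [e /= e_gt0 He].
exists e => // d d_gt0 de.
have Vd : V d by apply: He => //; rewrite /ball /= sub0r normrN gtr0_norm.
by rewrite -lte_fin; apply: le_lt_trans supc; apply: ereal_sup_ubound; exists d.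
Qed.

Definition clip (a : R) : R := if a < -1 then -1 else if 1 < a then 1 else a.

Lemma clip_bound a : -1 <= clip a <= 1.
Proof. by rewrite /clip; case: ltrP => h1; [lra | case: ltrP => h2; lra]. Qed.

Lemma clip_lipschitz (a b : R) : `|clip a - clip b| <= `|a - b|.
Proof.
have n1 := ler_norm (a - b); have n2 := ler_norm (b - a); rewrite distrC in n2.
rewrite ler_norml /clip.
case: (ltrP a (-1)) => ha; case: (ltrP 1 a) => ha'; case: (ltrP b (-1)) => hb;
  case: (ltrP 1 b) => hb'; apply/andP; split; lra.
Qed.

Lemma sqloss_clip_le (y f h : R) : -1 <= y <= 1 ->
  (y - clip h) ^+ 2 <= (y - f) ^+ 2 + 4 * `|f - h|.
Proof.
move=> /andP[y1 y2].
have c1 : (y - clip f) ^+ 2 <= (y - f) ^+ 2.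
  by rewrite /clip; case: ltrP => h1; [nra | case: ltrP => h2; nra].
have c2 := clip_lipschitz f h.
have /andP[f1 f2] := clip_bound f; have /andP[h1 h2] := clip_bound h.
have c3 : (y - clip h) ^+ 2 <= (y - clip f) ^+ 2 + 4 * `|clip f - clip h|.
  by case: (lerP 0 (clip f - clip h)) => e; [rewrite ger0_norm | rewrite ltr0_norm]; nra.
lra.
Qed.

Lemma sum_indicator_le (N d : nat) : \sum_(t < N) ((t <= d)%N%:R : R) <= d.+1%:R.
Proof.
suff -> : \sum_(t < N) ((t <= d)%N%:R : R) = (minn N d.+1)%:R.
  by rewrite ler_nat geq_minr.
elim: N => [|N IH]; first by rewrite big_ord0 min0n.
rewrite big_ord_recr /= IH -natrD; congr (_%:R).
case: (leqP N d) => h.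
  by rewrite (minn_idPl (leqW h)) (minn_idPl (h : (N.+1 <= d.+1)%N)) addn1.
by rewrite (minn_idPr (h : (d.+1 <= N)%N)) (minn_idPr (leqW h)) addn0.
Qed.

Lemma sum_const_inv_le (T : Type) (s : seq T) (a : R) : 0 < a ->
  \sum_(g <- s) (a * (size s)%:R)^-1 <= a^-1.
Proof.
move=> a_gt0; rewrite big_const_seq count_predT iter_addr_0.
case: (size s) => [|n]; first by rewrite mulr0n invr_ge0 ltW.
by rewrite invfM -mulrnAr -[_^-1 *+ _]mulr_natr mulVf ?pnatr_eq0 ?mulr1.
Qed.

Section Aggregation.
Variable X : topologicalType.
Variable net : nat -> nat -> seq (X -> R).

Notation expert := (nat * nat * (X -> R))%type.

Definition expert_pred (j : expert) (t : nat) (x : X) : R :=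
  if (maxn j.1.1 j.1.2 < t)%N then clip (2 ^+ j.1.2 * j.2 x) else 0.

Lemma expert_pred_bound j t x : -1 <= expert_pred j t x <= 1.
Proof. by rewrite /expert_pred; case: ifP => _; [exact: clip_bound | lra]. Qed.

Definition new_experts (n : nat) : seq expert :=
  [seq (K, n, g) | K <- iota 0 n.+1, g <- net K n] ++
  [seq (n, m, g) | m <- iota 0 n, g <- net n m].

Fixpoint experts (n : nat) : seq expert :=
  if n is n'.+1 then experts n' ++ new_experts n' else [::].

Definition prior (j : expert) : R :=
  ((2 * maxn j.1.1 j.1.2 + 1)%:R * 2 ^+ (maxn j.1.1 j.1.2).+1
    * (size (net j.1.1 j.1.2))%:R)^-1.

Lemma prior_ge0 j : 0 <= prior j.
Proof. by rewrite /prior invr_ge0 !mulr_ge0 // exprn_ge0. Qed.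

Definition prior_mass n := \sum_(j <- experts n) prior j.

Lemma new_experts_maxn n j : j \in new_experts n -> maxn j.1.1 j.1.2 = n.
Proof.
rewrite mem_cat => /orP[] /allpairsPdep [a [g [ha _ ->]]] /=;
  move: ha; rewrite mem_iota add0n => /andP[_ ha].
  by apply/maxn_idPr; rewrite -ltnS.
by apply/maxn_idPl; apply: ltnW.
Qed.

Lemma prior_mass_new_experts n :
  \sum_(j <- new_experts n) prior j <= (2 ^+ n.+1)^-1.
Proof.
set B : R := ((2 * n + 1)%:R * 2 ^+ n.+1)^-1.
have sum_row (k : nat) (K M : nat -> nat) :
    (forall i, (i < k)%N -> maxn (K i) (M i) = n) ->
    \sum_(i <- iota 0 k) \sum_(g <- net (K i) (M i)) prior (K i, M i, g) <= k%:R * B.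
  move=> KM; apply: le_trans (_ : _ <= \sum_(i <- iota 0 k) B) _; last first.
    by rewrite big_const_seq count_predT iter_addr_0 size_iota mulr_natl.
  rewrite big_seq [X in _ <= X]big_seq; apply: ler_sum => i.
  rewrite mem_iota add0n => /andP[_ /KM KMi]; rewrite /prior /= KMi.
  exact: sum_const_inv_le.
rewrite /new_experts big_cat !big_allpairs_dep /=.
apply: le_trans (lerD (sum_row n.+1 id (fun=> n) _) (sum_row n (fun=> n) id _)) _.
- by move=> i; rewrite ltnS => /maxn_idPr.
- by move=> i /ltnW /maxn_idPl.
by rewrite -mulrDl -natrD addSn addnn -mul2n -addn1 /B invfM mulrA mulfV ?mul1r.
Qed.

Lemma prior_mass_le n : prior_mass n <= 1 - (2 ^+ n)^-1.
Proof.
elim: n => [|n IH]; first by rewrite /prior_mass big_nil expr0 invr1 subrr.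
rewrite /prior_mass /= big_cat -/(prior_mass n).
apply: le_trans (lerD IH (prior_mass_new_experts n)) _.
have : 0 <= (2 ^+ n)^-1 :> R by rewrite invr_ge0 exprn_ge0.
by rewrite exprS invfM; lra.
Qed.

Lemma prior_mass_le1 n : 0 <= 1 - prior_mass n.
Proof.
have := prior_mass_le n; have : 0 <= (2 ^+ n)^-1 :> R by rewrite invr_ge0 exprn_ge0.
lra.
Qed.

Lemma mem_experts K m g N :
  (maxn K m < N)%N -> g \in net K m -> (K, m, g) \in experts N.
Proof.
move=> hN hg; elim: N hN => [//|N IH] hN /=.
rewrite mem_cat; have [lt|ge] := ltnP (maxn K m) N; first by rewrite IH.
have eN : maxn K m = N by apply/eqP; rewrite eqn_leq ge -ltnS hN.
apply/orP; right; rewrite /new_experts mem_cat; apply/orP.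
have [mN|mN] := eqVneq m N.
  left; apply/allpairsPdep; exists K, g; split.
  - by rewrite mem_iota add0n /= ltnS -eN leq_maxl.
  - by rewrite -mN.
  - by rewrite mN.
right; apply/allpairsPdep; exists m, g.
have KN : K = N.
  by move: eN; rewrite /maxn; case: ifP => // _ h; move: mN; rewrite h eqxx.
have mlt : (m < N)%N by rewrite ltn_neqAle mN /= -eN leq_maxr.
by rewrite mem_iota add0n /= mlt -KN.
Qed.

Lemma ln_inv_prior_le K m g : g \in net K m ->
  0 < prior (K, m, g) /\
  ln (prior (K, m, g))^-1 <= 3 * (maxn K m)%:R + 1 + ln (size (net K m))%:R.
Proof.
move=> hg; set d := maxn K m.
have s_gt0 : (0 < size (net K m))%N by case: (net K m) hg.
have a_gt0 : 0 < (2 * d + 1)%:R :> R by rewrite ltr0n addn1.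
have b_gt0 : 0 < 2 ^+ d.+1 :> R by exact: exprn_gt0.
have c_gt0 : 0 < (size (net K m))%:R :> R by rewrite ltr0n.
rewrite /prior /= -/d invrK; split; first by rewrite invr_gt0 !mulr_gt0.
rewrite !lnM ?posrE ?mulr_gt0 // lnXn //.
have ln2_le1 : ln (2 : R) <= 1 by have := @le_ln1Dx _ (1 : R) ltac:(lra).
have : ln (2 * d + 1)%:R <= 2 * d%:R :> R.
  by rewrite natrD natrM addrC; apply: le_ln1Dx; have : 0 <= d%:R :> R by []; lra.
have : ln (2 : R) *+ d.+1 <= d.+1%:R.
  by rewrite -[ln 2 *+ _]mulr_natr ler_piMl.
rewrite -natr1; lra.
Qed.

Definition aggregate : strategy X := fun h x' =>
  let n := size h in
  let w j := prior j * expR (- (1/32) *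
      \sum_(t < n) ((nth (x', 0) h t).2 - expert_pred j t (nth (x', 0) h t).1) ^+ 2) in
  let w0 := (1 - prior_mass n) *
      expR (- (1/32) * \sum_(t < n) ((nth (x', 0) h t).2 - 0) ^+ 2) in
  (\sum_(j <- experts n) w j * expert_pred j n x') / (w0 + \sum_(j <- experts n) w j).

Section Run.
Variables (x : nat -> X) (y : nat -> R).
Hypothesis y_bound : forall t, -1 <= y t <= 1.

Definition expert_loss j n := \sum_(t < n) (y t - expert_pred j t (x t)) ^+ 2.
Definition zero_loss n := \sum_(t < n) (y t - 0) ^+ 2.
Definition aggregate_loss n := \sum_(t < n) (y t - pred_move aggregate x y t) ^+ 2.

Definition weight j n := prior j * expR (- (1/32) * expert_loss j n).
(* The prior mass of the experts that have not entered yet: they all predict 0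
   until they do. *)
Definition zero_weight n := (1 - prior_mass n) * expR (- (1/32) * zero_loss n).
Definition potential n := zero_weight n + \sum_(j <- experts n) weight j n.

Lemma weight_ge0 j n : 0 <= weight j n.
Proof. exact: mulr_ge0 (prior_ge0 j) (ltW (expR_gt0 _)). Qed.

Lemma zero_weight_ge0 n : 0 <= zero_weight n.
Proof. exact: mulr_ge0 (prior_mass_le1 n) (ltW (expR_gt0 _)). Qed.

Lemma pred_move_aggregate n : pred_move aggregate x y n =
  (\sum_(j <- experts n) weight j n * expert_pred j n (x n)) / potential n.
Proof.
rewrite /pred_move /aggregate /= size_map size_iota.
set h := [seq (x i, y i) | i <- iota 0 n].
have E (t : 'I_n) : nth (x n, 0) h t = (x t, y t).
  by rewrite (nth_map 0) ?size_iota // nth_iota.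
have loss j : \sum_(t < n) ((nth (x n, 0) h t).2 - expert_pred j t (nth (x n, 0) h t).1) ^+ 2
    = expert_loss j n by apply: eq_bigr => t _; rewrite E.
have loss0 : \sum_(t < n) ((nth (x n, 0) h t).2 - 0) ^+ 2 = zero_loss n.
  by apply: eq_bigr => t _; rewrite E.
by rewrite loss0; congr (_ / (_ + _)); apply: eq_bigr => j _; rewrite loss.
Qed.

Lemma expR_loss_add (a b : R) :
  expR (- (1/32) * (a + b)) = expR (- (1/32) * a) * expR (- (1/32) * b).
Proof. by rewrite mulrDr exp.expRD. Qed.

Lemma potential_succ n : potential n.+1 =
  zero_weight n * expR (- (1/32) * (y n - 0) ^+ 2) +
  \sum_(j <- experts n) weight j n * expR (- (1/32) * (y n - expert_pred j n (x n)) ^+ 2).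
Proof.
have zero_succ : zero_loss n.+1 = zero_loss n + (y n - 0) ^+ 2.
  by rewrite /zero_loss big_ord_recr.
have new_loss j : j \in new_experts n -> expert_loss j n.+1 = zero_loss n.+1.
  move=> jn; apply: eq_bigr => t _; rewrite /expert_pred (new_experts_maxn jn).
  by rewrite ltnNge -ltnS ltn_ord.
have new_weight : \sum_(j <- new_experts n) weight j n.+1 =
    (\sum_(j <- new_experts n) prior j) * expR (- (1/32) * zero_loss n.+1).
  by rewrite mulr_suml big_seq [RHS]big_seq; apply: eq_bigr => j /new_loss; rewrite /weight => ->.
rewrite /potential /= big_cat new_weight /zero_weight /prior_mass /= big_cat.
rewrite zero_succ expR_loss_add /=.
have old_weight : \sum_(j <- experts n) weight j n.+1 = \sum_(j <- experts n)
    weight j n * expR (- (1/32) * (y n - expert_pred j n (x n)) ^+ 2).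
  by apply: eq_bigr => j _; rewrite /weight /expert_loss big_ord_recr expR_loss_add mulrA.
rewrite old_weight; ring.
Qed.

Lemma potential_step n :
  potential n.+1 <= expR (- (1/32) * (y n - pred_move aggregate x y n) ^+ 2) * potential n.
Proof.
rewrite potential_succ pred_move_aggregate [X in _ <= X]mulrC /potential.
exact: expR_sqloss_mixture (zero_weight_ge0 n) (@weight_ge0^~ n)
  (fun j => expert_pred_bound j n (x n)) (y_bound n).
Qed.

Lemma potential_le N : potential N <= expR (- (1/32) * aggregate_loss N).
Proof.
elim: N => [|N IH].
  rewrite /potential /zero_weight /prior_mass /zero_loss /aggregate_loss /=.
  by rewrite !big_nil !big_ord0 subr0 mulr0 exp.expR0 mul1r addr0.
apply: le_trans (potential_step N) _.
by rewrite /aggregate_loss big_ord_recr /= expR_loss_add mulrC ler_wpM2r.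
Qed.

Lemma regret_expert j N : j \in experts N -> 0 < prior j ->
  aggregate_loss N <= expert_loss j N + 32 * ln (prior j)^-1.
Proof.
move=> jN p_gt0.
have : weight j N <= potential N.
  rewrite /potential (big_rem _ jN) /=.
  have := zero_weight_ge0 N.
  have : 0 <= \sum_(i <- rem j (experts N)) weight i N by apply: sumr_ge0 => i _; exact: weight_ge0.
  lra.
move/le_trans/(_ (potential_le N)).
rewrite /weight -{1}(lnK p_gt0) -exp.expRD ler_expR (lnV p_gt0); lra.
Qed.

Lemma expert_loss_le K m g (f : X -> R) (eps : R) N :
  (forall z, `|f z - 2 ^+ m * g z| <= eps) ->
  expert_loss (K, m, g) N <=
    \sum_(t < N) (y t - f (x t)) ^+ 2 + (maxn K m).+1%:R + 4 * N%:R * eps.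
Proof.
move=> fg.
have eps_ge0 : 0 <= eps by apply: le_trans (fg (x 0%N)).
have step (t : 'I_N) : (y t - expert_pred (K, m, g) t (x t)) ^+ 2 <=
    ((y t - f (x t)) ^+ 2 + 4 * eps) + ((t <= maxn K m)%N)%:R.
  rewrite /expert_pred /=; case: ltnP => h.
    have := sqloss_clip_le (f (x t)) (2 ^+ m * g (x t)) (y_bound t); have := fg (x t).
    rewrite /= addr0; lra.
  have /andP[h1 h2] := y_bound t; have := sqr_ge0 (y t - f (x t)).
  rewrite /= subr0; nra.
rewrite /expert_loss; apply: le_trans (ler_sum _ (fun t _ => step t)) _.
rewrite !big_split /= sumr_const card_ord -mulr_natl.
have := sum_indicator_le N (maxn K m); lra.
Qed.

(* 97 d + 33 = 32 (3 d + 1) + (d + 1): the log inverse prior of the expert and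
   the rounds before it enters. *)
Lemma aggregate_regret_le K m g (f : X -> R) (eps : R) N :
  (maxn K m < N)%N -> g \in net K m ->
  (forall z, `|f z - 2 ^+ m * g z| <= eps) ->
  aggregate_loss N <= \sum_(t < N) (y t - f (x t)) ^+ 2
    + (97 * (maxn K m)%:R + 33 + 32 * ln (size (net K m))%:R + 4 * N%:R * eps).
Proof.
move=> KmN g_net fg.
have [p_gt0 ln_prior] := ln_inv_prior_le g_net.
have := regret_expert (mem_experts KmN g_net) p_gt0.
have := expert_loss_le K N fg.
rewrite -natr1; lra.
Qed.

End Run.
End Aggregation.

Lemma exists_pow2_between (r : R) : exists m, r <= 2 ^+ m /\ 2 ^+ m <= 2 * Num.max 1 r.
Proof.
have m1 : 1 <= Num.max 1 r by rewrite le_max lexx.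
have mr : r <= Num.max 1 r by rewrite le_max lexx orbT.
have /ltW : r < 2 ^+ Num.bound r by exact: upper_nthrootP.
elim: (Num.bound r) => [|n IH] hn; first by exists 0%N; rewrite expr0; lra.
have [h|h] := lerP r (2 ^+ n); first exact: IH.
by exists n.+1; split => //; rewrite exprS; lra.
Qed.

Lemma scaled_net_approx (X : topologicalType) (F : set (X -> R)) nrm f (c r : R) s :
  banach_fun_space_cpt F nrm -> F f -> 0 < c -> nrm f <= c ->
  is_net (unit_ball F nrm) r s ->
  exists2 g, g \in s & forall z, `|f z - c * g z| <= c * r.
Proof.
case=> [[_ [_ [_ F_scale]]] [_ [_ [nrm_scale _]]] _ _] Ff c_gt0 f_le [_ s_net].
have [|g gs fg] := s_net (fun z => c^-1 * f z).
  split; first exact: F_scale.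
  by rewrite nrm_scale // ger0_norm ?invr_ge0 ?(ltW c_gt0) // ler_pdivrMl // mulr1.
exists g => // z; have -> : f z - c * g z = c * (c^-1 * f z - g z).
  by rewrite mulrBr mulrA mulfV ?gt_eqF // mul1r.
by rewrite normrM (gtr0_norm c_gt0) ler_wpM2l // ltW.
Qed.

Lemma ln_size_net_le (X : topologicalType) (U : set (X -> R)) (r gamma c : R)
    (s : seq (X -> R)) : 0 < r ->
  metric_entropy U r / r^-1 `^ gamma < c -> covering_number U r = (size s)%:R ->
  ln (size s)%:R <= c * r^-1 `^ gamma.
Proof.
rewrite /metric_entropy => r_gt0 entropy_lt cover; move: entropy_lt; rewrite cover.
have ln2_gt0 : 0 < ln (2 : R) by apply: ln_gt0; lra.
have ln2_le1 : ln (2 : R) <= 1 by have := @le_ln1Dx _ (1 : R) ltac:(lra).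
have P_gt0 : 0 < r^-1 `^ gamma by rewrite powR_gt0 ?invr_gt0.
rewrite ltr_pdivrMr // ltr_pdivrMr //.
have : 0 <= ln (size s)%:R :> R.
  by case: (size s) => [|n]; [rewrite mulr0n ln0 | apply: ln_ge0; rewrite ler1n].
nra.
Qed.

Lemma expR_ge_sqr_half (z : R) : 0 <= z -> z ^+ 2 / 2 <= expR z.
Proof.
move=> z_ge0; have := @expR_ge1Dxn _ z 1 z_ge0.
by rewrite /= (_ : 2`!%:R = 2) //; lra.
Qed.

Section Schedule.
Variables L gamma : R.
Hypotheses (L_gt0 : 0 < L) (gamma_gt0 : 0 < gamma).

Local Notation beta := (1 / (gamma + 1)).
Local Notation alpha := (gamma / (gamma + 1)).

Let gamma1_gt0 : 0 < gamma + 1. Proof. exact: addr_gt0. Qed.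
Let beta_gt0 : 0 < beta. Proof. exact: divr_gt0. Qed.
Let alpha_gt0 : 0 < alpha. Proof. exact: divr_gt0. Qed.
Let alphaDbeta : alpha + beta = 1.
Proof. by rewrite -mulrDl divff // lt0r_neq0. Qed.
Let gamma_beta : gamma * beta = alpha.
Proof. by rewrite mulrA mulr1. Qed.

Definition net_radius (t : nat) : R := expR (beta * (ln L - ln 2 * t%:R)).
Definition net_cost (t : nat) : R := expR (beta * ln L + alpha * (ln 2 * t%:R)).

Lemma entropy_term_net_radius t : L * (net_radius t)^-1 `^ gamma = net_cost t.
Proof.
rewrite -expRN /powR gt_eqF ?expR_gt0 // expRK -{1}(lnK L_gt0) -exp.expRD.
congr expR; rewrite -gamma_beta.
have h : 1 - (gamma * beta + beta) = 0 by rewrite gamma_beta alphaDbeta subrr.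
transitivity (beta * ln L + gamma * beta * (ln 2 * t%:R)
              + ln L * (1 - (gamma * beta + beta))); first ring.
by rewrite h mulr0 addr0.
Qed.

Lemma pow2_net_radius t : 2 ^+ t * net_radius t = net_cost t.
Proof.
rewrite -[2 ^+ t]lnK ?posrE ?exprn_gt0 // lnXn // -exp.expRD -[ln 2 *+ t]mulr_natr.
congr expR; transitivity (beta * ln L + alpha * (ln 2 * t%:R)
                          + ln 2 * t%:R * (1 - (alpha + beta))); first ring.
by rewrite alphaDbeta subrr mulr0 addr0.
Qed.

Lemma net_cost_le t (M : R) : 0 < M -> 2 ^+ t <= M ->
  net_cost t <= L `^ beta * M `^ alpha.
Proof.
move=> M_gt0 tM; rewrite /powR !gt_eqF // -exp.expRD ler_expR lerD2l.
by rewrite ler_wpM2l ?(ltW alpha_gt0) // mulr_natr -lnXn // ler_ln ?posrE ?exprn_gt0.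
Qed.

Lemma schedule_eventually e0 : 0 < e0 -> exists T, forall t, (T <= t)%N ->
  net_radius t < e0 /\ 97 * t%:R + 33 <= net_cost t.
Proof.
move=> e0_gt0.
have ln2_gt0 : 0 < ln (2 : R) by apply: ln_gt0; lra.
pose x1 := expR (ln L - ln e0 / beta).
pose c := L `^ beta * (alpha * ln 2) ^+ 2 / 2.
have c_gt0 : 0 < c by rewrite divr_gt0 // mulr_gt0 ?powR_gt0 // exprn_gt0 // mulr_gt0.
exists (maxn (Num.bound x1) (maxn 1 (Num.bound (130 / c)))) => t.
rewrite !geq_max => /and3P[tx1 t_ge1 tc]; split.
  have : ln x1 < ln 2 * t%:R.
    by rewrite mulr_natr -lnXn // ltr_ln ?posrE ?expR_gt0 ?exprn_gt0 // upper_nthrootP.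
  rewrite /x1 expRK => lt_t.
  have : ln L - ln 2 * t%:R < ln e0 / beta by lra.
  rewrite ltr_pdivlMr // mulrC => lt_e0.
  by rewrite /net_radius -ltr_ln ?posrE ?expR_gt0 // expRK.
(* c t^2 >= 130 t >= 97 t + 33 *)
have ct : 130 < c * t%:R.
  have : 0 <= 130 / c by rewrite divr_ge0 // ltW.
  move/archi_boundP.
  rewrite ltr_pdivrMr // => /lt_le_trans; apply.
  by rewrite mulrC ler_pM2l // ler_nat.
have t1r : 1 <= t%:R :> R by rewrite ler1n.
have : c * t%:R ^+ 2 <= net_cost t.
  rewrite /net_cost exp.expRD (_ : expR (beta * ln L) = L `^ beta); last first.
    by rewrite /powR gt_eqF.
  rewrite /c -!mulrA ler_wpM2l ?powR_ge0 //.
  apply: le_trans (expR_ge_sqr_half _); first by rewrite le_eqVlt; apply/orP; left; apply/eqP; ring.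
  by rewrite mulrA mulr_ge0 ?(ltW alpha_gt0) // mulr_ge0 // ltW.
nra.
Qed.

(* The entropy term costs 64 times [net_cost], the approximation term 8 times,
   and the remaining term once: 73 in all. *)
Lemma regret_budget (K m N s : nat) (phi : R) :
  (2 ^ K <= N < 2 ^ K.+1)%N -> 2 ^+ m <= phi ->
  ln s%:R <= 2 * net_cost (K + m) -> 97 * (K + m)%:R + 33 <= net_cost (K + m) ->
  97 * (maxn K m)%:R + 33 + 32 * ln s%:R + 4 * N%:R * (2 ^+ m * net_radius (K + m))
  <= 73 * L `^ beta * phi `^ alpha * N%:R `^ alpha.
Proof.
move=> /andP[]; rewrite -(ler_nat R) -(ltr_nat R) !natrX => KN NK m_phi ln_s lin.
have pow2K_gt0 : 0 < 2 ^+ K :> R by exact: exprn_gt0.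
have pow2m_gt0 : 0 < 2 ^+ m :> R by exact: exprn_gt0.
have phi_gt0 : 0 < phi := lt_le_trans pow2m_gt0 m_phi.
have N_gt0 : 0 < N%:R :> R := lt_le_trans pow2K_gt0 KN.
have cost_le : net_cost (K + m) <= L `^ beta * phi `^ alpha * N%:R `^ alpha.
  rewrite -mulrA -powRM ?(ltW phi_gt0) ?(ltW N_gt0) //.
  apply: net_cost_le; first exact: mulr_gt0.
  by rewrite exprD mulrC; apply: ler_pM => //; apply: ltW.
have approx : N%:R * (2 ^+ m * net_radius (K + m)) <= 2 * net_cost (K + m).
  have N_le : N%:R <= 2 * 2 ^+ K :> R by rewrite -exprS ltW.
  rewrite -pow2_net_radius exprD -!mulrA [X in _ <= X]mulrA.
  by apply: ler_wpM2r N_le; exact: mulr_ge0 (ltW pow2m_gt0) (ltW (expR_gt0 _)).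
have d_le : (maxn K m)%:R <= (K + m)%:R :> R.
  by rewrite ler_nat geq_max leq_addr leq_addl.
lra.
Qed.

End Schedule.

Theorem corollary8 :
  exists C : R,
  forall (X : topologicalType) (F : set (X -> R)) (nrm : (X -> R) -> R)
         (gamma : R),
    [set: X] !=set0 ->
    banach_fun_space_cpt F nrm ->
    0 < gamma ->
    (0 < entropy_limsup (unit_ball F nrm) gamma)%E ->
    (entropy_limsup (unit_ball F nrm) gamma < +oo)%E ->
    let L := fine (entropy_limsup (unit_ball F nrm) gamma) in
    exists S : strategy X,
      forall f : X -> R, F f ->
        let phi := 2 * Num.max 1 (nrm f) in
        exists N0 : nat, forall N : nat, (N0 <= N)%N ->
          forall (x : nat -> X) (y : nat -> R),
            (forall n, -1 <= y n <= 1) ->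
            \sum_(n < N) (y n - pred_move S x y n) ^+ 2
            <= \sum_(n < N) (y n - f (x n)) ^+ 2
               + C * L `^ (1 / (gamma + 1)) * phi `^ (gamma / (gamma + 1))
                 * (N%:R) `^ (gamma / (gamma + 1)).
Proof.
exists 73 => X F nrm gamma _ HF gamma_gt0 lim_gt0 lim_fin L.
have lim_L : entropy_limsup (unit_ball F nrm) gamma = L%:E.
  by rewrite /L fineK // gt0_fin_numE.
have L_gt0 : 0 < L by rewrite -lte_fin -lim_L.
have [e0 e0_gt0 entropy_small] : exists2 e0 : R, 0 < e0 & forall d, 0 < d -> d < e0 ->
    metric_entropy (unit_ball F nrm) d / d^-1 `^ gamma < 2 * L.
  by apply: entropy_limsup_lt; rewrite lim_L lte_fin; lra.
have [T schedule] := schedule_eventually L_gt0 gamma_gt0 e0_gt0.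
have [_ _ _ ball_cpt] := HF.
have [net net_min] := @minimal_nets _ _ (fun K m => net_radius L gamma (K + m))
  (fun _ _ => expR_gt0 _) ball_cpt.
exists (aggregate net) => f Ff phi.
have [m [f_le m_phi]] := exists_pow2_between (nrm f).
exists (maxn (2 ^ T) m.+1) => N; rewrite geq_max => /andP[TN mN] x y y_bd.
pose K := trunc_log 2 N.
have N_gt0 : (0 < N)%N by apply: leq_trans TN; rewrite expn_gt0.
have K_bd := trunc_log_bounds (isT : (1 < 2)%N) N_gt0.
have TK : (T <= K)%N by exact: trunc_log_max.
have KN : (K < N)%N.
  by case/andP: K_bd => + _; apply: leq_trans; exact: ltn_expl.
have [is_net_Km size_Km] := net_min K m.
have [g g_net fg] := scaled_net_approx HF Ff (exprn_gt0 m (ltr0Sn _ 1)) f_le is_net_Km.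
apply: le_trans (aggregate_regret_le x y_bd _ g_net fg) _; first by rewrite gtn_max KN.
have [r_small lin_le] := schedule _ (leq_trans TK (leq_addr m K)).
rewrite lerD2l; apply: regret_budget => //.
rewrite -entropy_term_net_radius // mulrA.
exact: ln_size_net_le (expR_gt0 _) (entropy_small _ (expR_gt0 _) r_small) size_Km.
Qed.
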